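(* Realize $\mathrm{SO}(3)\times\mathbb{R}$ as the group of $4\times4$ matrices $(C,v)=\begin{pmatrix}C&0\\0&e^v\end{pmatrix}$, $C\in\mathrm{SO}(3)$, $v\in\mathbb{R}$, and let $E_1=e_{32}-e_{23}$, $E_2=e_{13}-e_{31}$, $E_3=e_{21}-e_{12}$, $E_4=e_{44}$ ($e_{jk}$ the $4\times4$ matrix units), $e_1=E_1$, $e_2=E_4$, $e_3=E_2$, $e_4=E_3$. For $\alpha_1^2+\alpha_2^2+\alpha_3^2=1$, $\beta\in\mathbb{R}$ let $$\gamma_2(t)=\gamma_2(\alpha_1,\alpha_2,\alpha_3,\beta;t)=\exp\bigl(t(\alpha_1e_1+\alpha_2e_2+\alpha_3e_3+\beta e_4)\bigr)\exp(-t\beta e_4)$$ (the arclength geodesics through $\mathrm{Id}$ of the left-invariant sub-Riemannian metric $\rho_2$ defined by $\mathrm{span}(e_1,e_2,e_3)$ with orthonormal basis $e_1,e_2,e_3$). Put $w_2=\sqrt{1-\alpha_2^2+\beta^2}$, $\mu_2=\frac{\sin w_2t}{w_2}$, $\nu_2=\frac{1-\cos w_2t}{w_2^2}$. If $\alpha_2\neq\pm1$, then $\gamma_2(t)=(C,v)(t)$ with $v(t)=\alpha_2t$ and the columns $C_1,C_2,C_3$ of $C(t)\in\mathrm{SO}(3)$ given by $$C_1=\begin{pmatrix}(1-\nu_2(\alpha_3^2+\beta^2))\cos\beta t-(\alpha_1\alpha_3\nu_2-\beta\mu_2)\sin\beta t\\ (\alpha_1\alpha_3\nu_2+\beta\mu_2)\cos\beta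 t-(1-\nu_2(\alpha_1^2+\beta^2))\sin\beta t\\ (\alpha_1\beta\nu_2-\alpha_3\mu_2)\cos\beta t-(\alpha_3\beta\nu_2+\alpha_1\mu_2)\sin\beta t\end{pmatrix},$$ $$C_2=\begin{pmatrix}(1-\nu_2(\alpha_3^2+\beta^2))\sin\beta t+(\alpha_1\alpha_3\nu_2-\beta\mu_2)\cos\beta t\\ (\alpha_1\alpha_3\nu_2+\beta\mu_2)\sin\beta t+(1-\nu_2(\alpha_1^2+\beta^2))\cos\beta t\\ (\alpha_1\beta\nu_2-\alpha_3\mu_2)\sin\beta t+(\alpha_3\beta\nu_2+\alpha_1\mu_2)\cos\beta t\end{pmatrix},\quad C_3=\begin{pmatrix}\alpha_1\beta\nu_2+\alpha_3\mu_2\\ \alpha_3\beta\nu_2-\alpha_1\mu_2\\ 1-\nu_2(\alpha_1^2+\alpha_3^2)\end{pmatrix}.$$ If $\alpha_2=\pm1$, then $\gamma_2(t)=(E,\alpha_2t)$, $t\in\mathbb{R}$, where $E$ is the $3\times3$ identity matrix.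
   Context: The matrices $E_1,\dots,E_4$ satisfy $[E_1,E_2]=E_3$, $[E_2,E_3]=E_1$, $[E_3,E_1]=E_2$, $[E_i,E_4]=0$. *)

From HB Require Import structures.
From mathcomp Require Import all_boot all_order all_algebra.
From mathcomp Require Import all_classical all_reals all_analysis.
Set Implicit Arguments. Unset Strict Implicit. Unset Printing Implicit Defensive.
Import Order.TTheory GRing.Theory Num.Theory.
Import numFieldNormedType.Exports.
Local Open Scope ring_scope.

Definition mexp (R : realType) (A : 'M[R]_4) : 'M[R]_4 :=
  limn (series (fun k : nat => (k`!%:R)^-1 *: A ^+ k)).

(* Matrix units e_{jk} (1-based in the paper, 0-based here). *)
Definition eu (R : realType) (j k : 'I_4) : 'M[R]_4 := delta_mx j k.

Definition i0 : 'I_4 := inord 0.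
Definition i1 : 'I_4 := inord 1.
Definition i2 : 'I_4 := inord 2.
Definition i3 : 'I_4 := inord 3.

Definition E1 (R : realType) : 'M[R]_4 := eu R i2 i1 - eu R i1 i2.
Definition E2 (R : realType) : 'M[R]_4 := eu R i0 i2 - eu R i2 i0.
Definition E3 (R : realType) : 'M[R]_4 := eu R i1 i0 - eu R i0 i1.
Definition E4 (R : realType) : 'M[R]_4 := eu R i3 i3.

Definition e1 (R : realType) := E1 R.
Definition e2 (R : realType) := E4 R.
Definition e3 (R : realType) := E2 R.
Definition e4 (R : realType) := E3 R.

Definition gamma2 (R : realType) (a1 a2 a3 b t : R) : 'M[R]_4 :=
  mexp (t *: (a1 *: e1 R + a2 *: e2 R + a3 *: e3 R + b *: e4 R))
  *m mexp ((- (t * b)) *: e4 R).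

Definition pairCv (R : realType) (C : 'M[R]_3) (v : R) : 'M[R]_4 :=
  block_mx C 0 0 (expR v)%:M.

Definition w2 (R : realType) (a2 b : R) : R := Num.sqrt (1 - a2 ^+ 2 + b ^+ 2).
Definition mu2 (R : realType) (a2 b t : R) : R :=
  sin (w2 a2 b * t) / w2 a2 b.
Definition nu2 (R : realType) (a2 b t : R) : R :=
  (1 - cos (w2 a2 b * t)) / (w2 a2 b) ^+ 2.

Definition Cmat (R : realType) (a1 a2 a3 b t : R) : 'M[R]_3 :=
  let mu := mu2 a2 b t in
  let nu := nu2 a2 b t in
  let c := cos (b * t) in
  let s := sin (b * t) in
  let C1 : seq R := [:: (1 - nu * (a3 ^+ 2 + b ^+ 2)) * c - (a1 * a3 * nu - b * mu) * s;
                (a1 * a3 * nu + b * mu) * c - (1 - nu * (a1 ^+ 2 + b ^+ 2)) * s;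
                (a1 * b * nu - a3 * mu) * c - (a3 * b * nu + a1 * mu) * s] in
  let C2 : seq R := [:: (1 - nu * (a3 ^+ 2 + b ^+ 2)) * s + (a1 * a3 * nu - b * mu) * c;
                (a1 * a3 * nu + b * mu) * s + (1 - nu * (a1 ^+ 2 + b ^+ 2)) * c;
                (a1 * b * nu - a3 * mu) * s + (a3 * b * nu + a1 * mu) * c] in
  let C3 : seq R := [:: a1 * b * nu + a3 * mu;
                a3 * b * nu - a1 * mu;
                1 - nu * (a1 ^+ 2 + a3 ^+ 2)] in
  \matrix_(i < 3, j < 3) nth (0 : R) (nth [::] [:: C1; C2; C3] j) i.

From HB Require Import structures.
From mathcomp Require Import all_boot all_order all_algebra.
From mathcomp Require Import all_classical all_reals all_analysis.
From mathcomp Require Import ring lra.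
Import Order.TTheory GRing.Theory Num.Theory.
Import numFieldNormedType.Exports.
Local Open Scope ring_scope.

(* The horizontal part of the generator is K = a1 E1 + a3 E2 + b E3, an element
   of so(3) with K^3 = -(a1^2 + a3^2 + b^2) K = -w2^2 K, while E4 is an
   idempotent annihilating K on both sides.  The exponential series of
   t K + q E4 therefore splits into a sine, a cosine and an exponential series,
   which is Rodrigues' formula
     exp (t K + q E4) = 1 + (sin (w t) / w) K + ((1 - cos (w t)) / w^2) K^2
                        + (e^q - 1) E4.
   The correction factor exp (-t b E3) is the same formula for K = E3, and
   multiplying the two out gives the entries of C.  When a2 = +-1 we have
   a1 = a3 = 0, and the two rotations about the E3 axis cancel. *)

Lemma nat_zero_odd_even (m : nat) :
  m = 0%N \/ (exists j, m = j.*2.+1) \/ (exists j, m = j.+1.*2).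
Proof.
elim: m => [|m [->|[[j ->]|[j ->]]]]; first by left.
- by right; left; exists 0%N.
- by right; right; exists j.
- by right; left; exists j.+1.
Qed.

Section Rodrigues.
Context {R : realType} {K Q : 'M[R]_4} {w : R}.
Hypotheses (w_neq0 : w != 0) (K_cube : K ^+ 3 = - w ^+ 2 *: K).
Hypotheses (Q_idem : Q * Q = Q) (KQ0 : K * Q = 0) (QK0 : Q * K = 0).

Lemma expr_odd_cube j : K ^+ j.*2.+1 = (- w ^+ 2) ^+ j *: K.
Proof.
elim: j => [|j IH]; first by rewrite expr1 expr0 scale1r.
have -> : (j.+1.*2.+1 = j.*2.+1 + 2)%N by rewrite doubleS addn2.
by rewrite exprD IH -scalerAl -exprS K_cube scalerA -exprSr.
Qed.

Lemma expr_even_cube j : K ^+ j.+1.*2 = (- w ^+ 2) ^+ j *: K ^+ 2.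
Proof. by rewrite doubleS exprSr expr_odd_cube -scalerAl -expr2. Qed.

Variables t q : R.
Let X := t *: K + q *: Q.

Lemma exprS_orth_sum k : X ^+ k.+1 = t ^+ k.+1 *: K ^+ k.+1 + q ^+ k.+1 *: Q.
Proof.
elim: k => [|k IH]; first by rewrite !expr1.
have QKk0 : Q * K ^+ k.+1 = 0 by rewrite exprS mulrA QK0 mul0r.
rewrite exprS IH /X !mulrDl !mulrDr -!scalerAl -!scalerAr !scalerA.
by rewrite QKk0 KQ0 Q_idem !scaler0 addr0 add0r -!exprS.
Qed.

(* The constant term [1] is carried by [exp_coeff 0] so that every summand of
   the exponential series splits along the same four matrices. *)
Let D := 1 - Q + (w ^+ 2)^-1 *: K ^+ 2.

Lemma exp_term_split k : (k`!%:R)^-1 *: X ^+ k =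
  exp_coeff 0 k *: D + (w^-1 * sin_coeff (w * t) k) *: K
  + (- (w ^+ 2)^-1 * cos_coeff (w * t) k) *: K ^+ 2 + exp_coeff q k *: Q.
Proof.
have fact_neq0 n : n`!%:R != 0 :> R by rewrite pnatr_eq0 -lt0n fact_gt0.
rewrite /exp_coeff /sin_coeff /cos_coeff.
have [->|[[j ->]|[j ->]]] := nat_zero_odd_even k.
- rewrite /D /= !expr0; apply/matrixP => i l; rewrite !mxE; field.
  by rewrite w_neq0 fact_neq0.
- rewrite exprS_orth_sum expr_odd_cube /= odd_double /= expr0n /= doubleK.
  rewrite exprMn [(- w ^+ 2) ^+ _]exprNn.
  have -> : w ^+ j.*2.+1 = w * (w ^+ 2) ^+ j by rewrite exprS -exprM mul2n.
  apply/matrixP => i l; rewrite !mxE; field.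
  by rewrite fact_neq0 w_neq0.
- rewrite -[j.+1.*2]/(j.*2.+1).+1 exprS_orth_sum -[(j.*2.+1).+1]/(j.+1.*2).
  rewrite expr_even_cube /= odd_double /= expr0n /= doubleK.
  rewrite exprMn [(- w ^+ 2) ^+ _]exprNn -exprnP [(-1) ^+ j.+1]exprS.
  have -> : w ^+ j.+1.*2 = w ^+ 2 * (w ^+ 2) ^+ j by rewrite -exprS -exprM mul2n.
  apply/matrixP => i l; rewrite !mxE; field.
  by rewrite fact_neq0 w_neq0.
Qed.

Lemma exp_series_split n : series (fun k => (k`!%:R)^-1 *: X ^+ k) n =
  series (exp_coeff 0) n *: D + (w^-1 * series (sin_coeff (w * t)) n) *: K
  + (- (w ^+ 2)^-1 * series (cos_coeff (w * t)) n) *: K ^+ 2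
  + series (exp_coeff q) n *: Q.
Proof.
elim: n => [|n IH].
  by rewrite /series /= !big_geq // !mulr0 !scale0r !addr0.
rewrite !seriesSr IH exp_term_split.
apply/matrixP => i l; rewrite !mxE; ring.
Qed.

Lemma mexp_rodrigues : mexp X =
  1 + (sin (w * t) / w) *: K + ((1 - cos (w * t)) / w ^+ 2) *: K ^+ 2
  + (expR q - 1) *: Q.
Proof.
have X_series_cvg : (series (fun k => (k`!%:R)^-1 *: X ^+ k) @ \oo -->
    expR 0 *: D + (w^-1 * sin (w * t)) *: K
    + (- (w ^+ 2)^-1 * cos (w * t)) *: K ^+ 2 + expR q *: Q)%classic.
  rewrite (funext exp_series_split).
  apply: cvgD; [apply: cvgD; [apply: cvgD|]|]; apply: cvgZr_tmp.
  - exact: is_cvg_series_exp_coeff.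
  - by apply: cvgMl_tmp; rewrite unlock; exact: is_cvg_series_sin_coeff.
  - by apply: cvgMl_tmp; rewrite unlock; exact: is_cvg_series_cos_coeff.
  - exact: is_cvg_series_exp_coeff.
rewrite /mexp (norm_cvg_lim X_series_cvg) expR0 /D.
apply/matrixP => i l; rewrite !mxE; field.
by rewrite w_neq0.
Qed.

End Rodrigues.

Section Coordinates.
Context {R : realType}.

(* Entries indexed by [nat], so that after [mx4M] each entry of a product is an
   explicit polynomial in the entries of the factors, ready for [ring]. *)
Definition mx4 (f : nat -> nat -> R) : 'M[R]_4 := \matrix_(i < 4, j < 4) f i j.

Lemma mx4M f g : mx4 f * mx4 g =
  mx4 (fun i j => f i 0%N * g 0%N j + f i 1%N * g 1%N j
                  + f i 2%N * g 2%N j + f i 3%N * g 3%N j).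
Proof.
apply/matrixP => i j; rewrite -mulmxE !mxE !big_ord_recl big_ord0 !mxE /=.
by rewrite addr0 !addrA.
Qed.

Lemma mx4D f g : mx4 f + mx4 g = mx4 (fun i j => f i j + g i j).
Proof. by apply/matrixP => i j; rewrite !mxE. Qed.

Lemma mx4N f : - mx4 f = mx4 (fun i j => - f i j).
Proof. by apply/matrixP => i j; rewrite !mxE. Qed.

Lemma mx4Z a f : a *: mx4 f = mx4 (fun i j => a * f i j).
Proof. by apply/matrixP => i j; rewrite !mxE. Qed.

Lemma mx4_0 : 0 = mx4 (fun _ _ => 0).
Proof. by apply/matrixP => i j; rewrite !mxE. Qed.

Lemma mx4_1 : 1 = mx4 (fun i j => (i == j)%:R).
Proof. by apply/matrixP => i j; rewrite !mxE. Qed.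

Lemma eu_mx4 (a b : nat) : (a < 4)%N -> (b < 4)%N ->
  eu R (inord a) (inord b) = mx4 (fun i j => ((i == a) && (j == b))%:R).
Proof.
by move=> a_lt4 b_lt4; apply/matrixP => i j; rewrite !mxE -!val_eqE /= !inordK.
Qed.

Lemma pairCv_mx4 (C : 'M[R]_3) v : pairCv C v =
  mx4 (fun i j => if (i < 3)%N && (j < 3)%N then C (inord i) (inord j)
                  else if (i == 3%N) && (j == 3%N) then expR v else 0).
Proof.
apply/matrixP => i j; rewrite [RHS]mxE /pairCv.
rewrite -[i](@splitK 3 1) -[j](@splitK 3 1).
case: (@fintype.split 3 1 i) => a; case: (@fintype.split 3 1 j) => c;
  rewrite /block_mx !(mxE, unsplitK) /=.
- by rewrite !ltn_ord !inord_val.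
- have -> : (3 + c < 3)%N = false by rewrite ltnNge leq_addr.
  by rewrite andbF /= (ltn_eqF (ltn_ord a)).
- by rewrite (ltn_eqF (ltn_ord c)) andbF.
- by case: a => [[|a] ?] //; case: c => [[|c] ?] //=; rewrite mulr1n.
Qed.

Lemma eq_mx4 f g :
  f 0%N 0%N = g 0%N 0%N -> f 0%N 1%N = g 0%N 1%N ->
  f 0%N 2%N = g 0%N 2%N -> f 0%N 3%N = g 0%N 3%N ->
  f 1%N 0%N = g 1%N 0%N -> f 1%N 1%N = g 1%N 1%N ->
  f 1%N 2%N = g 1%N 2%N -> f 1%N 3%N = g 1%N 3%N ->
  f 2%N 0%N = g 2%N 0%N -> f 2%N 1%N = g 2%N 1%N ->
  f 2%N 2%N = g 2%N 2%N -> f 2%N 3%N = g 2%N 3%N ->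
  f 3%N 0%N = g 3%N 0%N -> f 3%N 1%N = g 3%N 1%N ->
  f 3%N 2%N = g 3%N 2%N -> f 3%N 3%N = g 3%N 3%N ->
  mx4 f = mx4 g.
Proof.
move=> *; apply/matrixP => i j; rewrite !mxE.
by case: i => [[|[|[|[|i]]]] ?] //; case: j => [[|[|[|[|j]]]] ?].
Qed.

Lemma E1_mx4 : E1 R =
  mx4 (fun i j => ((i == 2%N) && (j == 1%N))%:R - ((i == 1%N) && (j == 2%N))%:R).
Proof. by rewrite /E1 !eu_mx4 // mx4N mx4D. Qed.

Lemma E2_mx4 : E2 R =
  mx4 (fun i j => ((i == 0%N) && (j == 2%N))%:R - ((i == 2%N) && (j == 0%N))%:R).
Proof. by rewrite /E2 !eu_mx4 // mx4N mx4D. Qed.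

Lemma E3_mx4 : E3 R =
  mx4 (fun i j => ((i == 1%N) && (j == 0%N))%:R - ((i == 0%N) && (j == 1%N))%:R).
Proof. by rewrite /E3 !eu_mx4 // mx4N mx4D. Qed.

Lemma E4_mx4 : E4 R = mx4 (fun i j => ((i == 3%N) && (j == 3%N))%:R).
Proof. by rewrite /E4 !eu_mx4. Qed.

End Coordinates.

Section SO3xR.
Context {R : realType}.

Definition so3 (a1 a3 b : R) : 'M[R]_4 := a1 *: E1 R + a3 *: E2 R + b *: E3 R.

Lemma so3_cube a1 a3 b :
  so3 a1 a3 b ^+ 3 = - (a1 ^+ 2 + a3 ^+ 2 + b ^+ 2) *: so3 a1 a3 b.
Proof.
rewrite [_ ^+ 3]exprS expr2 /so3 E1_mx4 E2_mx4 E3_mx4.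
by rewrite !(mx4Z, mx4D, mx4M); apply: eq_mx4 => /=; ring.
Qed.

Lemma so3_E4 a1 a3 b : so3 a1 a3 b * E4 R = 0.
Proof.
rewrite mx4_0 /so3 E1_mx4 E2_mx4 E3_mx4 E4_mx4 !(mx4Z, mx4D, mx4M).
by apply: eq_mx4 => /=; ring.
Qed.

Lemma E4_so3 a1 a3 b : E4 R * so3 a1 a3 b = 0.
Proof.
rewrite mx4_0 /so3 E1_mx4 E2_mx4 E3_mx4 E4_mx4 !(mx4Z, mx4D, mx4M).
by apply: eq_mx4 => /=; ring.
Qed.

Lemma E4_idem : E4 R * E4 R = E4 R.
Proof. by rewrite E4_mx4 mx4M; apply: eq_mx4 => /=; ring. Qed.

Lemma so3_001 : so3 0 0 1 = E3 R.
Proof. by rewrite /so3 !scale0r !add0r scale1r. Qed.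

Lemma mexp_E3_E4 s q : mexp (s *: E3 R + q *: E4 R) =
  1 + sin s *: E3 R + (1 - cos s) *: E3 R ^+ 2 + (expR q - 1) *: E4 R.
Proof.
have cube : so3 0 0 1 ^+ 3 = - 1 ^+ 2 *: so3 0 0 1.
  by rewrite so3_cube expr0n /= !add0r.
have := mexp_rodrigues (oner_neq0 R) cube E4_idem (so3_E4 0 0 1) (E4_so3 0 0 1) s q.
by rewrite so3_001 !mul1r expr1n !divr1.
Qed.

Lemma mexp_E3 s : mexp (s *: E3 R) = 1 + sin s *: E3 R + (1 - cos s) *: E3 R ^+ 2.
Proof.
by have := mexp_E3_E4 s 0; rewrite scale0r !addr0 expR0 subrr scale0r addr0.
Qed.

Lemma generator_so3_E4 a1 a2 a3 b t :
  t *: (a1 *: e1 R + a2 *: e2 R + a3 *: e3 R + b *: e4 R) =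
  t *: so3 a1 a3 b + (a2 * t) *: E4 R.
Proof. by apply/matrixP => i j; rewrite /e1 /e2 /e3 /e4 /so3 !mxE; ring. Qed.

End SO3xR.

Section Geodesic.
Context {R : realType}.
Variables a1 a2 a3 b : R.
Hypothesis unit_alpha : a1 ^+ 2 + a2 ^+ 2 + a3 ^+ 2 = 1.

Lemma sqr_w2 : w2 a2 b ^+ 2 = a1 ^+ 2 + a3 ^+ 2 + b ^+ 2.
Proof.
have a1_sqr := sqr_ge0 a1; have a3_sqr := sqr_ge0 a3; have b_sqr := sqr_ge0 b.
by rewrite /w2 sqr_sqrtr; move: unit_alpha; lra.
Qed.

Lemma w2_neq0 : a2 != 1 -> a2 != -1 -> w2 a2 b != 0.
Proof.
move=> a2_neq1 a2_neqN1.
have : a2 ^+ 2 != 1 by rewrite sqrf_eq1 negb_or a2_neq1.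
rewrite -sqrf_eq0 sqr_w2 neq_lt => /orP a2_sqr; apply: lt0r_neq0.
have a1_sqr := sqr_ge0 a1; have a3_sqr := sqr_ge0 a3; have b_sqr := sqr_ge0 b.
by move: unit_alpha; case: a2_sqr; lra.
Qed.

Lemma gamma2_generic t : a2 != 1 -> a2 != -1 ->
  gamma2 a1 a2 a3 b t = pairCv (Cmat a1 a2 a3 b t) (a2 * t).
Proof.
move=> a2_neq1 a2_neqN1.
have cube : so3 a1 a3 b ^+ 3 = - w2 a2 b ^+ 2 *: so3 a1 a3 b.
  by rewrite so3_cube sqr_w2.
have := mexp_rodrigues (w2_neq0 a2_neq1 a2_neqN1) cube E4_idem
  (so3_E4 a1 a3 b) (E4_so3 a1 a3 b) t (a2 * t).
rewrite /gamma2 generator_so3_E4 => ->; rewrite /e4 mexp_E3 sinN cosN.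
rewrite pairCv_mx4 !expr2 mulmxE /so3 E1_mx4 E2_mx4 E3_mx4 E4_mx4 mx4_1.
rewrite !(mx4Z, mx4D, mx4M) /Cmat /mu2 /nu2 (mulrC t b).
by apply: eq_mx4 => /=; rewrite ?mxE ?inordK //=; ring.
Qed.

Lemma gamma2_vertical t : a2 = 1 \/ a2 = -1 ->
  gamma2 a1 a2 a3 b t = pairCv 1%:M (a2 * t).
Proof.
move=> a2_pm1.
have a2_sqr : a2 ^+ 2 = 1 by case: a2_pm1 => ->; rewrite ?sqrrN expr1n.
have : a1 ^+ 2 + a3 ^+ 2 == 0 by apply/eqP; move: unit_alpha; lra.
rewrite paddr_eq0 ?sqr_ge0 // !sqrf_eq0 => /andP[/eqP a1_0 /eqP a3_0].
rewrite /gamma2 generator_so3_E4 a1_0 a3_0.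
have -> : t *: so3 0 0 b = (t * b) *: E3 R by rewrite /so3 !scale0r !add0r scalerA.
rewrite mexp_E3_E4 /e4 mexp_E3 sinN cosN.
rewrite pairCv_mx4 !expr2 mulmxE E3_mx4 E4_mx4 mx4_1 !(mx4Z, mx4D, mx4M).
have cos2_sin2 := cos2Dsin2 (t * b).
by apply: eq_mx4 => /=; rewrite ?mxE -?val_eqE /= ?inordK //= ?mul1r; lra.
Qed.

End Geodesic.

Theorem theorem7 (R : realType) (a1 a2 a3 b : R) :
  a1 ^+ 2 + a2 ^+ 2 + a3 ^+ 2 = 1 ->
  (a2 != 1 -> a2 != -1 ->
     forall t : R, gamma2 a1 a2 a3 b t = pairCv (Cmat a1 a2 a3 b t) (a2 * t)) /\
  (a2 = 1 \/ a2 = -1 ->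
     forall t : R, gamma2 a1 a2 a3 b t = pairCv 1%:M (a2 * t)).
Proof.
move=> unit_alpha; split=> [a2_neq1 a2_neqN1 t | a2_pm1 t].
- exact: gamma2_generic.
- exact: gamma2_vertical.
Qed.
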